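(* Let $n\ge2$ and let $\mathfrak{g}$ be of type $C_{n-1}$. Then \[ \widetilde{\operatorname{ps}}(\omega_{n-1})=q^{\binom{n}{2}}\operatorname{ps}(\omega_{n-1})=\operatorname{Cat}_n(q). \]
   Context: For type $C_{n-1}$, $\omega_{n-1}=\epsilon_1+\cdots+\epsilon_{n-1}$ and $\operatorname{ch}V(\omega_{n-1})$ is a Laurent polynomial in $x_1,\dots,x_{n-1}$. The principal specialization $\operatorname{ps}(\lambda)$ is $\operatorname{ch}V(\lambda)$ evaluated at $x_i=q^i$ ($1\le i\le n-1$). The normalized principal specialization is $\widetilde{\operatorname{ps}}(\lambda)=q^{-\eta}\operatorname{ps}(\lambda)$ where $\eta$ is the lowest power of $q$ occurring in $\operatorname{ps}(\lambda)$. $\operatorname{Cat}_n(q)=\frac{1}{[n+1]_q}\begin{bmatrix}2n\\ n\end{bmatrix}_q$ is the Mahonian $q$-Catalan number, where $[k]_q=1+q+\cdots+q^{k-1}$ and $\begin{bmatrix}a\\ b\end{bmatrix}_q$ is the Gaussian binomial coefficient. *)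

From HB Require Import structures.
From mathcomp Require Import all_boot all_order all_algebra.
From mathcomp Require Import fraction.
Set Implicit Arguments. Unset Strict Implicit. Unset Printing Implicit Defensive.
Import Order.TTheory GRing.Theory Num.Theory.
Local Open Scope ring_scope.

Definition RF := {fraction {poly rat}}.
Definition tofracQ (p : {poly rat}) : RF := @FracField.tofrac _ p.
Definition q : RF := tofracQ 'X.

(* Type C_r, weights written in epsilon-coordinates lam : 'I_r -> nat
   (lam i = coefficient of eps_{i+1}); dominant means weakly decreasing.
   rho = (r, r-1, ..., 1).
   Weyl character formula for C_r:
     ch V(lam) = det[x_j^{l_i} - x_j^{-l_i}] / det[x_j^{r-i} - x_j^{-(r-i)}],
   with l_i = lam_i + r - i (0-indexed i), evaluated in the field F. *)
Definition alternantC (F : fieldType) (r : nat) (x : 'I_r -> F) (mu : 'I_r -> nat) : F :=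
  \det (\matrix_(i < r, j < r) (x j ^+ mu i - (x j)^-1 ^+ mu i)).

Definition rhoC (r : nat) (i : 'I_r) : nat := (r - i)%N.

Definition charC (F : fieldType) (r : nat) (lam : 'I_r -> nat) (x : 'I_r -> F) : F :=
  alternantC x (fun i => (lam i + rhoC i)%N) / alternantC x (@rhoC r).

Definition omegaC (r : nat) : 'I_r -> nat := fun _ => 1%N.

(* principal specialization x_i = q^i (1 <= i <= r); with 0-indexed j : 'I_r,
   x_j = q^(j+1). *)
Definition psC (r : nat) (lam : 'I_r -> nat) : RF :=
  charC lam (fun j : 'I_r => q ^+ (j.+1)).

Definition lowest_power (f : RF) (eta : int) : Prop :=
  exists p : {poly rat}, p`_0 != 0 /\ f = q ^ eta * tofracQ p.

Definition is_normalized_ps (f g : RF) : Prop :=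
  exists eta : int, lowest_power f eta /\ g = q ^ (- eta) * f.

Definition qint (k : nat) : RF := \sum_(i < k) q ^+ i.
Definition qfact (k : nat) : RF := \prod_(1 <= i < k.+1) qint i.
Definition qbinom (a b : nat) : RF := qfact a / (qfact b * qfact (a - b)).
Definition qCat (n : nat) : RF := (qint n.+1)^-1 * qbinom (2 * n) n.

From mathcomp Require Import all_boot all_algebra.
From mathcomp Require Import fraction ring zify.
Set Implicit Arguments. Unset Strict Implicit. Unset Printing Implicit Defensive.
Import GRing.Theory.
Local Open Scope ring_scope.

(* Transposing the alternants of the Weyl character formula at x_j = q^j turns
   them into symplectic Vandermonde determinants in the variables q^a, which
   factor as prod_a (q^a - q^-a) * prod_(b < a) (q^b + q^-b - q^a - q^-a).
   For omega_(n-1) the exponents a run over {2, ..., n} in the numerator and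
   over {1, ..., n-1} in the denominator; both are subsets of {1, ..., n}, so
   the quotient is the product of the factors involving n divided by the
   product of those involving 1. Up to powers of q, each factor is a product
   of q-integers, [n-b][n+b] above against [b][b+2] below; these telescope to
   [2n]! / ([n]! [n+1]!) = Cat_n(q), and the powers of q to q^-C(n,2). Finally
   Cat_n(q) = [2n, n] - q [2n, n+1] is a polynomial with constant term 1. *)

Section SymplecticVandermonde.
Variable R : comNzRingType.

Fixpoint chebU (j : nat) : {poly R} :=
  match j with
  | 0 => 1
  | 1 => 'X
  | (j1.+1 as j2).+1 => 'X * chebU j2 - chebU j1
  end.

Lemma chebU_coef_ge j k : (j <= k)%N -> (chebU j)`_k = (k == j)%:R.
Proof.
suff: (forall k, (j <= k)%N -> (chebU j)`_k = (k == j)%:R) /\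
      (forall k, (j < k)%N -> (chebU j.+1)`_k = (k == j.+1)%:R).
  by case=> coef_ge _; apply: coef_ge.
elim: j {k} => [|j [IH0 IH1]]; first by split=> k _; rewrite ?coef1 ?coefX.
split=> // -[|k] ltjk //=; rewrite coefB coefXM /= IH1 // IH0; last lia.
have /gtn_eqF-> : (j < k.+1)%N by lia.
by rewrite subr0.
Qed.

Lemma chebU_horner j (z w : R) : z * w = 1 ->
  (chebU j).[z + w] * (z - w) = z ^+ j.+1 - w ^+ j.+1.
Proof.
move=> zw1.
suff: (chebU j).[z + w] * (z - w) = z ^+ j.+1 - w ^+ j.+1 /\
      (chebU j.+1).[z + w] * (z - w) = z ^+ j.+2 - w ^+ j.+2 by case.
elim: j => [|j [IH0 IH1]].
  by rewrite /= hornerC hornerX; split; ring.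
split=> //=; rewrite hornerD hornerN hornerM hornerX mulrBl -mulrA IH1 IH0.
by rewrite -[X in _ - X = _]mul1r -zw1 !exprS; ring.
Qed.

Lemma det_symplectic_Vandermonde r (z w : 'I_r -> R) :
  (forall i, z i * w i = 1) ->
  \det (\matrix_(j < r, i < r) (z i ^+ j.+1 - w i ^+ j.+1)) =
  \prod_(i < r) (z i - w i) *
  \prod_(i < r) \prod_(j < r | (i < j)%N) ((z j + w j) - (z i + w i)).
Proof.
move=> zw1.
pose U : 'M[R]_r := \matrix_(j, k) (chebU j)`_k.
have U_trig : is_trig_mx U.
  by apply/is_trig_mxP => j k ltjk; rewrite mxE chebU_coef_ge ?(ltnW ltjk) ?gtn_eqF.
have -> : \matrix_(j < r, i < r) (z i ^+ j.+1 - w i ^+ j.+1) =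
    U *m Vandermonde r (\row_i (z i + w i)) *m diag_mx (\row_i (z i - w i)).
  apply/matrixP => j i; rewrite mul_mx_diag !mxE -chebU_horner //.
  rewrite (@horner_coef_wide _ r); last first.
    apply/leq_sizeP => k lerk; have ltjk : (j < k)%N by apply: leq_trans lerk.
    by rewrite chebU_coef_ge ?(ltnW ltjk) ?gtn_eqF.
  by congr (_ * _); apply: eq_bigr => k _; rewrite !mxE.
rewrite !det_mulmx det_trig // det_Vandermonde det_diag.
rewrite big1 ?mul1r => [|j _]; last by rewrite mxE chebU_coef_ge ?eqxx.
rewrite mulrC; congr (_ * _); first by apply: eq_bigr => i _; rewrite mxE.
by apply: eq_bigr => i _; apply: eq_bigr => j _; rewrite !mxE.
Qed.

End SymplecticVandermonde.

Section QAnalogues.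
Variables (F : fieldType) (t : F).

(* At t = q these are, by conversion, qint, qfact, qbinom and qCat. *)

Definition qnat k := \sum_(i < k) t ^+ i.
Definition qfactorial k := \prod_(1 <= i < k.+1) qnat i.
Definition qbinomial a b := qfactorial a / (qfactorial b * qfactorial (a - b)).
Definition qcatalan n := (qnat n.+1)^-1 * qbinomial (2 * n) n.

Lemma qnat1 : qnat 1 = 1.
Proof. by rewrite /qnat big_ord1. Qed.

Lemma qnatD m k : qnat (m + k) = qnat m + t ^+ m * qnat k.
Proof.
rewrite /qnat big_split_ord mulr_sumr /=; congr (_ + _).
by apply: eq_bigr => i _; rewrite exprD.
Qed.

Lemma subrX1_qnat k : t ^+ k - 1 = (t - 1) * qnat k.
Proof. exact: subrX1. Qed.

Lemma qnat_neq0_not_root1 k : t ^+ k != 1 -> qnat k != 0.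
Proof. by apply: contraNneq => qk0; rewrite -subr_eq0 subrX1_qnat qk0 mulr0. Qed.

Lemma qfactorial0 : qfactorial 0 = 1.
Proof. by rewrite /qfactorial big_geq. Qed.

Lemma qfactorialS k : qfactorial k.+1 = qfactorial k * qnat k.+1.
Proof. by rewrite /qfactorial big_nat_recr. Qed.

Lemma qfactorialD m k :
  qfactorial (m + k) = qfactorial m * \prod_(1 <= b < k.+1) qnat (m + b).
Proof.
rewrite /qfactorial (@big_cat_nat _ _ _ m.+1) ?leq_addr //= -addnS.
rewrite -[m.+1 in X in _ * X]add1n big_addn.
have -> : (m + k.+1 - m = k.+1)%N by rewrite addKn.
by congr (_ * _); apply: eq_bigr => b _; rewrite addnC.
Qed.

Hypothesis qnat_neq0 : forall k, (0 < k)%N -> qnat k != 0.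

Lemma qfactorial_neq0 k : qfactorial k != 0.
Proof.
elim: k => [|k IHk]; first by rewrite qfactorial0 oner_eq0.
by rewrite qfactorialS mulf_neq0 ?qnat_neq0.
Qed.

Lemma qbinomial0 a : qbinomial a 0 = 1.
Proof. by rewrite /qbinomial subn0 qfactorial0 mul1r divff ?qfactorial_neq0. Qed.

Lemma qbinomialnn a : qbinomial a a = 1.
Proof. by rewrite /qbinomial subnn qfactorial0 mulr1 divff ?qfactorial_neq0. Qed.

Lemma qbinomial_pascal a b : (b < a)%N ->
  qbinomial a.+1 b.+1 = qbinomial a b + t ^+ b.+1 * qbinomial a b.+1.
Proof.
move=> /subnKC <-; move: (a - b.+1)%N => k; rewrite /qbinomial.
have -> : ((b.+1 + k).+1 - b.+1 = k.+1)%N by lia.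
have -> : (b.+1 + k - b = k.+1)%N by lia.
rewrite addKn qfactorialS -addnS qnatD !qfactorialS.
by field; rewrite !qfactorial_neq0 !qnat_neq0.
Qed.

Lemma qcatalanE n : qcatalan n = qfactorial (2 * n) / (qfactorial n * qfactorial n.+1).
Proof.
rewrite /qcatalan /qbinomial qfactorialS.
have -> : (2 * n - n = n)%N by lia.
by field; rewrite qfactorial_neq0 qnat_neq0.
Qed.

Lemma qcatalan_qbinomialB n :
  qcatalan n.+1 = qbinomial (2 * n.+1) n.+1 - t * qbinomial (2 * n.+1) n.+2.
Proof.
rewrite qcatalanE /qbinomial.
have -> : (2 * n.+1 - n.+1 = n.+1)%N by lia.
have -> : (2 * n.+1 - n.+2 = n)%N by lia.
have qn2 := qnat_neq0 (ltn0Sn n.+1).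
rewrite !qfactorialS -[n.+2]/(1 + n.+1)%N qnatD qnat1 expr1 in qn2 *.
by field; rewrite qn2 qfactorial_neq0 qnat_neq0.
Qed.

End QAnalogues.

Section ReverseOrdinals.
Variables (R : comNzRingType) (c r : nat).

Lemma prod_rev_ord (P : pred nat) (f : nat -> R) :
  \prod_(i < r | P (c + (r - i))%N) f (c + (r - i))%N =
  \prod_(c.+1 <= a < (c + r).+1 | P a) f a.
Proof.
rewrite big_rev_mkord subSS addKn.
by apply: eq_big => [i|i _]; rewrite subSS addnBA // ltnW.
Qed.

Lemma prod_rev_ord_pairs (G : nat -> nat -> R) :
  \prod_(i < r) \prod_(j < r | (i < j)%N) G (c + (r - j))%N (c + (r - i))%N =
  \prod_(c.+1 <= a < (c + r).+1) \prod_(c.+1 <= b < a) G b a.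
Proof.
rewrite -(prod_rev_ord xpredT); apply: eq_bigr => i _.
rewrite (big_nat_widen _ _ (c + r).+1); last lia.
rewrite -prod_rev_ord; apply: eq_bigl => j.
by have := ltn_ord i; have := ltn_ord j; lia.
Qed.

End ReverseOrdinals.

Lemma sum_subn_bin2 r : (\sum_(1 <= b < r.+1) (r - b) = 'C(r, 2))%N.
Proof.
rewrite big_nat_rev big_add1 -bin2_sum; apply: eq_big_nat => b /andP[_ ltbr].
lia.
Qed.

Definition subV (F : fieldType) (z : F) := z - z^-1.
Definition addV (F : fieldType) (z : F) := z + z^-1.

Section WeylProduct.
Variables (F : fieldType) (t : F).

Definition weyl_prod m n :=
  \prod_(m <= a < n) subV (t ^+ a) *
  \prod_(m <= a < n) \prod_(m <= b < a) (addV (t ^+ b) - addV (t ^+ a)).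

Lemma weyl_prod_recr m n : (m <= n)%N -> weyl_prod m n.+1 =
  weyl_prod m n * (subV (t ^+ n) * \prod_(m <= b < n) (addV (t ^+ b) - addV (t ^+ n))).
Proof. by move=> lemn; rewrite /weyl_prod !(big_nat_recr n m) //=; ring. Qed.

Lemma weyl_prod_ltn m n : (m < n)%N -> weyl_prod m n =
  weyl_prod m.+1 n *
  (subV (t ^+ m) * \prod_(m.+1 <= a < n) (addV (t ^+ m) - addV (t ^+ a))).
Proof.
move=> ltmn; rewrite /weyl_prod !(big_ltn ltmn) [\prod_(m <= b < m) _]big_geq // mul1r.
under [X in _ * X = _]eq_big_nat => a /andP[lt_ma _] do rewrite (big_ltn lt_ma).
by rewrite big_split /=; ring.
Qed.

Hypothesis t_neq0 : t != 0.
Hypothesis t_not_root1 : forall k, (0 < k)%N -> t ^+ k != 1.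

Let t1_neq0 : t - 1 != 0.
Proof. by rewrite subr_eq0 -[t]expr1 t_not_root1. Qed.

Let qnat_neq0 k : (0 < k)%N -> qnat t k != 0.
Proof. by move=> k_gt0; apply/qnat_neq0_not_root1/t_not_root1. Qed.

Lemma subV_expr a : t ^+ a * subV (t ^+ a) = (t - 1) * qnat t (a + a).
Proof. by rewrite /subV mulrBr -exprD mulfV ?expf_neq0 // subrX1_qnat. Qed.

Lemma addV_exprB b a : (b <= a)%N ->
  t ^+ a * (addV (t ^+ b) - addV (t ^+ a)) =
  - ((t - 1) ^+ 2 * (qnat t (a - b) * qnat t (a + b))).
Proof.
move=> /subnKC <-; move: (a - b)%N => k; rewrite addKn -addnA.
rewrite expr2 mulrACA -!subrX1_qnat /addV !exprD.
by field; apply/andP; split; apply: expf_neq0.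
Qed.

Lemma subV_expr_neq0 a : (0 < a)%N -> subV (t ^+ a) != 0.
Proof.
move=> a_gt0; have : t ^+ a * subV (t ^+ a) != 0.
  by rewrite subV_expr mulf_neq0 // qnat_neq0 // addn_gt0 a_gt0.
by apply: contraNneq => ->; rewrite mulr0.
Qed.

Lemma addV_exprB_neq0 b a : (b < a)%N -> addV (t ^+ b) - addV (t ^+ a) != 0.
Proof.
move=> ltba; have : t ^+ a * (addV (t ^+ b) - addV (t ^+ a)) != 0.
  by rewrite (addV_exprB (ltnW ltba)) oppr_eq0 !mulf_neq0 ?expf_neq0 ?qnat_neq0 //; lia.
by apply: contraNneq => ->; rewrite mulr0.
Qed.

Lemma weyl_prod_neq0 m n : (0 < m)%N -> weyl_prod m n != 0.
Proof.
move=> m_gt0; rewrite mulf_neq0 // prodf_seq_neq0; apply/allP => a.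
  by rewrite mem_index_iota => /andP[le_ma _]; apply: subV_expr_neq0; lia.
rewrite mem_index_iota => _ /=; rewrite prodf_seq_neq0; apply/allP => b.
by rewrite mem_index_iota => /andP[_ ltba]; apply: addV_exprB_neq0.
Qed.

Lemma alternantC_expr c r :
  alternantC (fun j : 'I_r => t ^+ j.+1) (fun i => (c + (r - i))%N) =
  weyl_prod c.+1 (c + r).+1.
Proof.
set z := fun i : 'I_r => t ^+ (c + (r - i)).
rewrite /alternantC -det_tr.
have -> : (\matrix_(i, j) ((t ^+ j.+1) ^+ (c + (r - i)) -
                            (t ^+ j.+1)^-1 ^+ (c + (r - i))))^T =
    \matrix_(j < r, i < r) (z i ^+ j.+1 - (z i)^-1 ^+ j.+1).
  by apply/matrixP => j i; rewrite !mxE !exprVn exprAC.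
rewrite det_symplectic_Vandermonde => [|i]; last by rewrite mulfV // expf_neq0.
rewrite (prod_rev_ord c r xpredT (fun a => subV (t ^+ a))).
by rewrite (prod_rev_ord_pairs c r (fun b a => addV (t ^+ b) - addV (t ^+ a))).
Qed.

Lemma weyl_factors_ratio r :
  t ^+ 'C(r.+1, 2) *
  (subV (t ^+ r.+1) * \prod_(1 <= b < r.+1) (addV (t ^+ b) - addV (t ^+ r.+1))) *
  (qfactorial t r.+1 * qfactorial t r.+2) =
  subV (t ^+ 1) * \prod_(2 <= a < r.+2) (addV (t ^+ 1) - addV (t ^+ a)) *
  qfactorial t (2 * r.+1).
Proof.
set P := \prod_(1 <= b < r.+1) _; rewrite big_add1 /=.
set Q := \prod_(1 <= b < r.+1) _.
have factorE b : (b <= r)%N ->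
    t ^+ (r - b) * (addV (t ^+ b) - addV (t ^+ r.+1)) * qnat t b.+2 * qnat t b =
    (addV (t ^+ 1) - addV (t ^+ b.+1)) * qnat t (r.+1 + b) * qnat t (r.+1 - b).
  move=> lebr; apply: (mulfI (expf_neq0 b.+1 t_neq0)).
  rewrite !mulrA -exprD.
  have -> : (b.+1 + (r - b) = r.+1)%N by lia.
  rewrite (addV_exprB (leqW lebr)) (addV_exprB (ltn0Sn b)) subn1 addn1; ring.
have prodE : t ^+ 'C(r, 2) * P * \prod_(1 <= b < r.+1) qnat t b.+2 =
    Q * \prod_(1 <= b < r.+1) qnat t (r.+1 + b).
  apply: (mulIf (qfactorial_neq0 qnat_neq0 r)).
  have {2}-> : qfactorial t r = \prod_(1 <= b < r.+1) qnat t (r.+1 - b).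
    rewrite big_nat_rev; apply: eq_big_nat => b /andP[_ ltbr]; congr (qnat t _); lia.
  rewrite -sum_subn_bin2 -prodrXr /P /Q -!big_split /=.
  by apply: eq_big_nat => b /andP[_ ltbr]; apply: factorE.
have subVE : t ^+ r * subV (t ^+ r.+1) * qnat t 2 = subV (t ^+ 1) * qnat t (2 * r.+1).
  apply: (mulfI t_neq0).
  transitivity (t ^+ r.+1 * subV (t ^+ r.+1) * qnat t 2); first by rewrite exprS; ring.
  transitivity (t ^+ 1 * subV (t ^+ 1) * qnat t (2 * r.+1)); last by rewrite expr1; ring.
  by rewrite !subV_expr addnn -mul2n /=; ring.
have qfactorial2 : qfactorial t 2 = qnat t 2.
  by rewrite !qfactorialS qfactorial0 qnat1 !mul1r.
transitivity (t ^+ r * subV (t ^+ r.+1) * qnat t 2 *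
  (t ^+ 'C(r, 2) * P * \prod_(1 <= b < r.+1) qnat t b.+2) * qfactorial t r.+1).
  by rewrite binS bin1 exprD (qfactorialD t 2 r) qfactorial2 /=; ring.
rewrite subVE prodE; have -> : (2 * r.+1 = (r.+1 + r).+1)%N by lia.
by rewrite (qfactorialS t (r.+1 + r)) (qfactorialD t r.+1 r); ring.
Qed.

Lemma charC_omega_qcatalan r :
  t ^+ 'C(r.+1, 2) * charC (@omegaC r) (fun j : 'I_r => t ^+ j.+1) = qcatalan t r.+1.
Proof.
have num : alternantC (fun j : 'I_r => t ^+ j.+1) (fun i => (omegaC i + rhoC i)%N) =
  weyl_prod 2 r.+2 := alternantC_expr 1 r.
have den : alternantC (fun j : 'I_r => t ^+ j.+1) (@rhoC r) =
  weyl_prod 1 r.+1 := alternantC_expr 0 r.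
rewrite /charC num den (qcatalanE qnat_neq0).
have splitR := weyl_prod_recr (leqnSn 1 : (1 <= r.+1)%N).
have splitL := weyl_prod_ltn (ltnSn 1 : (1 < r.+2)%N).
have ratio := weyl_factors_ratio r.
set N := subV (t ^+ r.+1) * _ in splitR ratio.
set D := subV (t ^+ 1) * _ in splitL ratio.
have W1_neq0 := @weyl_prod_neq0 1 r.+1 isT.
have := @weyl_prod_neq0 1 r.+2 isT; rewrite splitL mulf_eq0 negb_or => /andP[_ D_neq0].
have -> : weyl_prod 2 r.+2 = weyl_prod 1 r.+1 * N / D.
  by apply: (mulIf D_neq0); rewrite -splitL splitR mulfVK.
have -> : qfactorial t (2 * r.+1) =
    t ^+ 'C(r.+1, 2) * N * (qfactorial t r.+1 * qfactorial t r.+2) / D.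
  by rewrite ratio mulrC mulKf.
by field; rewrite W1_neq0 D_neq0 !(qfactorial_neq0 qnat_neq0).
Qed.

End WeylProduct.

Section GaussianPolynomial.
Variable R : nzRingType.

Fixpoint qbinom_poly (a b : nat) {struct a} : {poly R} :=
  match a, b with
  | _, 0 => 1
  | 0, _.+1 => 0
  | a.+1, b.+1 => qbinom_poly a b + 'X^(b.+1) * qbinom_poly a b.+1
  end.

Definition qcatalan_poly n := qbinom_poly (2 * n) n - 'X * qbinom_poly (2 * n) n.+1.

Lemma qbinom_poly_coef0 a b : (b <= a)%N -> (qbinom_poly a b)`_0 = 1.
Proof.
elim: a b => [|a IHa] [|b] //= lt_ba; rewrite ?coef1 //.
by rewrite coefD coefXnM /= IHa // addr0.
Qed.

Lemma qcatalan_poly_coef0 n : (qcatalan_poly n)`_0 = 1.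
Proof. by rewrite coefB coefXM /= qbinom_poly_coef0 ?subr0 // leq_pmull. Qed.

End GaussianPolynomial.

Lemma q_neq0 : q != 0.
Proof. by rewrite tofrac_eq0 polyX_eq0. Qed.

Lemma q_not_root1 k : (0 < k)%N -> q ^+ k != 1.
Proof.
move=> k_gt0; rewrite -subr_eq0 -rmorphXn -tofrac1 -rmorphB tofrac_eq0.
apply/eqP => /(congr1 (horner^~ 0)).
rewrite !hornerE expr0n (gtn_eqF k_gt0) /= mulr0n sub0r.
by move/eqP; rewrite oppr_eq0 oner_eq0.
Qed.

Lemma qnat_q_neq0 k : (0 < k)%N -> qnat q k != 0.
Proof. by move=> k_gt0; apply/qnat_neq0_not_root1/q_not_root1. Qed.

Lemma tofrac_qbinom_poly a b :
  tofracQ (qbinom_poly _ a b) = if (b <= a)%N then qbinomial q a b else 0.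
Proof.
elim: a b => [|a IHa] [|b] /=;
  rewrite /tofracQ ?tofrac1 ?tofrac0 ?(qbinomial0 qnat_q_neq0) //.
move: (IHa b) (IHa b.+1); rewrite /tofracQ tofracD tofracM tofracXn ltnS => -> ->.
case: ltngtP => [ltba | ltab | ->]; rewrite ?mulr0 ?addr0 //.
  by rewrite (qbinomial_pascal qnat_q_neq0 ltba).
by rewrite !(qbinomialnn qnat_q_neq0).
Qed.

Lemma tofrac_qcatalan_poly n : tofracQ (qcatalan_poly _ n.+1) = qCat n.+1.
Proof.
move: (tofrac_qbinom_poly (2 * n.+1) n.+1) (tofrac_qbinom_poly (2 * n.+1) n.+2).
rewrite /qcatalan_poly /tofracQ tofracB tofracM => -> ->.
have [-> ->] : (n.+1 <= 2 * n.+1)%N /\ (n.+2 <= 2 * n.+1)%N by lia.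
exact/esym/(qcatalan_qbinomialB qnat_q_neq0).
Qed.

Theorem theorem5p2 (n : nat) (hn : (2 <= n)%N) :
  is_normalized_ps (psC (@omegaC n.-1)) (q ^+ 'C(n, 2) * psC (@omegaC n.-1))
  /\ q ^+ 'C(n, 2) * psC (@omegaC n.-1) = qCat n.
Proof.
case: n hn => [//|r] _; change r.+1.-1 with r.
have catE : q ^+ 'C(r.+1, 2) * psC (@omegaC r) = qCat r.+1 :=
  charC_omega_qcatalan q_neq0 q_not_root1 r.
split; last exact: catE.
exists (- 'C(r.+1, 2)%:Z); split; last by rewrite opprK.
exists (qcatalan_poly _ r.+1); split; first by rewrite qcatalan_poly_coef0 oner_eq0.
by rewrite tofrac_qcatalan_poly -catE -exprnN mulKf // expf_neq0 // q_neq0.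
Qed.
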